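(* Let $\alpha=(x,u')$ and $\beta=(y,v')$ be points of $\mathcal{S}$ with $x\neq y$, $u'\neq v'$, and either ($u'\in y'^{\perp}$ and $v'\notin x'^{\perp}$) or ($u'\notin y'^{\perp}$ and $v'\in x'^{\perp}$) (perps in $S'$). Then $d(\alpha,\beta)=3$, where $d$ is the distance in the collinearity graph of $\mathcal{S}$.
   Context: Let $S=(P,L)$ and $S'=(P',L')$ be generalized quadrangles of order $(2,2)$ (every line has 3 points, every point lies on 3 lines, and for each point $x$ and line $l\not\ni x$ exactly one point of $l$ is collinear with $x$), with an isomorphism $x\mapsto x'$ from $S$ to $S'$. In a point-line geometry, $x^{\perp}$ is $x$ together with all points collinear with $x$, and $A^{\perp}=\bigcap_{a\in A}a^{\perp}$. A triad is a set of three pairwise non-collinear points, complete if $|T^{\perp}|=3$. The geometry $\mathcal{S}=(\mathcal{P},\mathcal{L})$ has point set $\mathcal{P}=\{(x,y')\in P\times P':y'\in x'^{\perp}\}$ and lines all $3$-subsets $\{(x,u'),(y,v'),(z,w')\}$ of $\mathcal{P}$ where $T=\{x,y,z\}$ (three distinct points) is a line or a complete triad of $S$ and $\{u',v',w'\}=T'^{\perp}$ in $S'$ with $u',v',w'$ distinct. *)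

From mathcomp Require Import all_boot.
Set Implicit Arguments. Unset Strict Implicit. Unset Printing Implicit Defensive.

Section GQ.
Variable P : finType.
Variable L : {set {set P}}.

Definition collinear (x y : P) : bool := [exists l in L, (x \in l) && (y \in l)].

Definition perp (x : P) : {set P} := [set y | (y == x) || collinear x y].

Definition perpS (A : {set P}) : {set P} := \bigcap_(a in A) perp a.

Definition is_GQ22 : Prop :=
  [/\ forall l, l \in L -> #|l| = 3,
      forall x : P, #|[set l in L | x \in l]| = 3
    & forall (x : P) l, l \in L -> x \notin l ->
        #|[set y in l | collinear x y]| = 1].

Definition triad (T : {set P}) : Prop :=
  #|T| = 3 /\ forall x y, x \in T -> y \in T -> x != y -> ~~ collinear x y.

Definition complete_triad (T : {set P}) : Prop := triad T /\ #|perpS T| = 3.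
End GQ.

Definition isom (P P' : finType) (L : {set {set P}}) (L' : {set {set P'}})
  (f : P -> P') : Prop :=
  bijective f /\ forall l : {set P}, (f @: l \in L') = (l \in L).

Section Construction.
Variables (P P' : finType) (L : {set {set P}}) (L' : {set {set P'}}) (f : P -> P').

Definition ptS (a : P * P') : bool := a.2 \in perp L' (f a.1).

Definition lineS (Lam : {set P * P'}) : Prop :=
  exists (x y z : P) (u v w : P'),
    [/\ Lam = [set (x, u); (y, v); (z, w)],
        [/\ ptS (x, u), ptS (y, v) & ptS (z, w)] /\
        [/\ x != y, y != z & x != z],
        [set x; y; z] \in L \/ complete_triad L [set x; y; z],
        [/\ u != v, v != w & u != w]
      & [set u; v; w] = perpS L' (f @: [set x; y; z])].

Definition adjS (a b : P * P') : Prop :=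
  a != b /\ exists Lam, lineS Lam /\ a \in Lam /\ b \in Lam.

Definition walkS (a b : P * P') (n : nat) : Prop :=
  exists g : nat -> P * P',
    [/\ g 0 = a, g n = b & forall i, i < n -> adjS (g i) (g i.+1)].

Definition distS (a b : P * P') (n : nat) : Prop :=
  walkS a b n /\ forall m, m < n -> ~ walkS a b m.
End Construction.

From mathcomp Require Import all_boot.
Set Implicit Arguments. Unset Strict Implicit. Unset Printing Implicit Defensive.

(* In a generalized quadrangle of order (2,2) two distinct points A, B have exactly
   three common neighbours, and every point is regular: a point collinear with two
   points of {A,B}^perp is collinear with the third.  Hence (a,p) and (b,q) are
   collinear in the new geometry exactly when a <> b, p <> q and p, q lie in
   {a',b'}^perp: the line of the new geometry comes from the line a'b' if a' ~ b',
   and otherwise from the complete triad {a',b',c'} with c' a third point of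
   {p,q}^perp.
   A path of length 3: pick w1 in {x',y'}^perp other than u, z' in {w1,v}^perp other
   than y', and w2 in {y',z'}^perp other than w1 and v; then (x,u), (y,w1), (z,w2),
   (y,v) is a path.  No shorter path: a common neighbour (z,w) of (x,u) and (y,v)
   would put x', y', z' in {u,w}^perp with v collinear with y' and z', hence with x'
   by regularity. *)

Lemma set3P (T : finType) (a b c z : T) :
  reflect [\/ z = a, z = b | z = c] (z \in [set a; b; c]).
Proof.
rewrite !inE -orbA; apply: (iffP or3P).
  by case=> /eqP ->; constructor.
by case=> ->; rewrite eqxx; constructor.
Qed.

Lemma cards3 (T : finType) (a b c : T) :
  a != b -> a != c -> b != c -> #|[set a; b; c]| = 3.
Proof.
by move=> ab ac bc; rewrite -setUA cardsU1 cards2 bc !inE negb_or ab ac.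
Qed.

Lemma card3_other (T : finType) (A : {set T}) a b :
  #|A| = 3 -> exists c, [/\ c \in A, c != a & c != b].
Proof.
move=> A3; have : ~~ (A \subset [set a; b]).
  by apply/negP => /subset_leq_card; rewrite A3 cards2; case: (a != b).
by case/subsetPn => c cA; rewrite !inE negb_or => /andP[ca cb]; exists c.
Qed.

Lemma card3_eq (T : finType) (A : {set T}) a b c :
  #|A| = 3 -> a \in A -> b \in A -> c \in A -> a != b -> a != c -> b != c ->
  A = [set a; b; c].
Proof.
move=> A3 aA bA cA ab ac bc; apply/eqP; rewrite eq_sym eqEcard A3 cards3 //.
by rewrite andbT; apply/subsetP => z /set3P[] ->.
Qed.

Section GeneralizedQuadrangle.
Variables (P : finType) (L : {set {set P}}).
Local Notation col := (collinear L).

Lemma collinearP x y : reflect (exists l, [/\ l \in L, x \in l & y \in l]) (col x y).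
Proof.
apply: (iffP existsP) => [[l /and3P[]] | [l [lL xl yl]]]; first by exists l.
by exists l; rewrite lL xl yl.
Qed.

Lemma line_collinear l x y : l \in L -> x \in l -> y \in l -> col x y.
Proof. by move=> lL xl yl; apply/collinearP; exists l. Qed.

Lemma collinear_sym : symmetric col.
Proof. by move=> x y; apply/collinearP/collinearP => -[l [lL ? ?]]; exists l. Qed.

Hypothesis gqL : is_GQ22 L.

Lemma line_card l : l \in L -> #|l| = 3.
Proof. by case: gqL => + _ _; apply. Qed.

Lemma lines_through_card x : #|[set l in L | x \in l]| = 3.
Proof. by case: gqL. Qed.

Lemma collinear_refl x : col x x.
Proof.
have /card_gt0P[l] : 0 < #|[set l in L | x \in l]| by rewrite lines_through_card.
by rewrite inE => /andP[lL xl]; apply: (line_collinear lL).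
Qed.

Lemma in_perp x y : (y \in perp L x) = col x y.
Proof. by rewrite inE; case: eqP => // ->; rewrite collinear_refl. Qed.

Lemma perpSP (A : {set P}) y : reflect {in A, forall a, col a y} (y \in perpS L A).
Proof.
by apply: (iffP bigcapP) => H a aA; [rewrite -in_perp | rewrite in_perp]; apply: H.
Qed.

Lemma collinear_on_line_uniq l p a b : l \in L -> p \notin l ->
  a \in l -> b \in l -> col p a -> col p b -> a = b.
Proof.
move=> lL pl al bl pa pb.
case: gqL => _ _ /(_ p l lL pl) /eqP/cards1P[z lz].
have : a \in [set y in l | col p y] by rewrite inE al pa.
have : b \in [set y in l | col p y] by rewrite inE bl pb.
by rewrite lz !inE => /eqP-> /eqP->.
Qed.

Lemma exists_collinear_on_line l p : l \in L -> p \notin l ->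
  exists2 y, y \in l & col p y.
Proof.
case: gqL => _ _ gq lL pl.
have /card_gt0P[y] : 0 < #|[set y in l | col p y]| by rewrite gq.
by rewrite inE => /andP[yl py]; exists y.
Qed.

Lemma mem_line_collinear2 l a b p : l \in L -> a \in l -> b \in l -> a != b ->
  col p a -> col p b -> p \in l.
Proof.
move=> lL al bl ab pa pb; apply: contraT => pl.
by rewrite (collinear_on_line_uniq lL pl al bl pa pb) eqxx in ab.
Qed.

Lemma line_uniq l1 l2 a b : l1 \in L -> l2 \in L -> a != b ->
  a \in l1 -> b \in l1 -> a \in l2 -> b \in l2 -> l1 = l2.
Proof.
move=> l1L l2L ab al1 bl1 al2 bl2; apply/eqP; rewrite eqEcard !line_card // leqnn andbT.
apply/subsetP => c cl1; apply: (mem_line_collinear2 l2L al2 bl2 ab);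
  exact: (line_collinear l1L).
Qed.

Lemma lines_eq_of_collinear l1 l2 c x y : l1 \in L -> l2 \in L ->
  c \in l1 -> c \in l2 -> x \in l1 -> y \in l2 -> x != c -> y != c -> col x y -> l1 = l2.
Proof.
move=> l1L l2L cl1 cl2 xl1 yl2 xc yc xy.
have yl1 : y \in l1.
  apply: (mem_line_collinear2 l1L cl1 xl1); rewrite 1?eq_sym 1?collinear_sym //.
  exact: line_collinear l2L cl2 yl2.
exact: line_uniq l1L l2L yc yl1 cl1 yl2 cl2.
Qed.

Lemma line_third l a b : l \in L -> a \in l -> b \in l -> a != b ->
  exists c, [/\ c != a, c != b & l = [set a; b; c]].
Proof.
move=> lL al bl ab; have [c [cl ca cb]] := card3_other a b (line_card lL).
by exists c; split; rewrite // (card3_eq (line_card lL) al bl cl) // eq_sym.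
Qed.

Lemma noncollinear_on_line l p a b : l \in L -> p \notin l ->
  a \in l -> b \in l -> a != b -> col p a -> ~~ col p b.
Proof.
move=> lL pl al bl ab pa; apply/negP => pb.
by move/eqP: ab; apply; apply: (collinear_on_line_uniq lL pl).
Qed.

Lemma collinear_third_on_line a b c p : [set a; b; c] \in L ->
  ~~ col p a -> ~~ col p b -> col p c.
Proof.
move=> lL pa pb.
have pl : p \notin [set a; b; c].
  by apply: contra pa => pl; apply: (line_collinear lL) => //; rewrite !inE eqxx.
have [y /set3P[]-> py //] := exists_collinear_on_line lL pl.
  by rewrite py in pa.
by rewrite py in pb.
Qed.

Lemma in_perpS2 a b y : (y \in perpS L [set a; b]) = col a y && col b y.
Proof.
apply/perpSP/andP => [H | [ya yb] z /set2P[]->//].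
by split; apply: H; rewrite !inE eqxx ?orbT.
Qed.

Lemma in_perpS3 a b c y :
  (y \in perpS L [set a; b; c]) = [&& col a y, col b y & col c y].
Proof.
apply/perpSP/and3P => [H | [ya yb yc] z /set3P[]->//].
by split; apply: H; rewrite !inE eqxx ?orbT.
Qed.

Lemma perp2_noncollinear u w a b : ~~ col u w ->
  a \in perpS L [set u; w] -> b \in perpS L [set u; w] -> a != b -> ~~ col a b.
Proof.
rewrite !in_perpS2 => uw /andP[ua wa] /andP[ub wb] ab.
apply: contra uw => /collinearP[l [lL al bl]].
by apply: (line_collinear lL); apply: (mem_line_collinear2 lL al bl ab).
Qed.

Lemma four_noncollinear p a b c d :
  col p a -> col p b -> col p c -> col p d ->
  ~~ col a b -> ~~ col a c -> ~~ col a d -> ~~ col b c -> ~~ col b d -> ~~ col c d ->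
  False.
Proof.
move=> /collinearP[la [laL pla ala]] /collinearP[lb [lbL plb blb]].
move=> /collinearP[lc [lcL plc clc]] /collinearP[ld [ldL pld dld]].
have lineD (l l' : {set P}) x y : l' \in L -> x \in l -> y \in l' -> ~~ col x y -> l != l'.
  move=> l'L xl yl'; apply: contra => /eqP ll'.
  by apply: (line_collinear l'L) => //; rewrite -ll'.
move=> ab ac ad bc bd cd.
have s_uniq : uniq [:: la; lb; lc; ld].
  rewrite /= !inE !negb_or (lineD _ _ _ _ lbL ala blb ab) (lineD _ _ _ _ lcL ala clc ac).
  rewrite (lineD _ _ _ _ ldL ala dld ad) (lineD _ _ _ _ lcL blb clc bc).
  by rewrite (lineD _ _ _ _ ldL blb dld bd) (lineD _ _ _ _ ldL clc dld cd).
have s_sub : {subset [:: la; lb; lc; ld] <= enum [set l in L | p \in l]}.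
  by move=> l; rewrite mem_enum !inE => /or4P[] /eqP->; apply/andP.
by have := uniq_leq_size s_uniq s_sub; rewrite -cardE lines_through_card.
Qed.

Lemma perp2_other A B p q : A != B ->
  p \in perpS L [set A; B] -> q \in perpS L [set A; B] ->
  exists r, [/\ r \in perpS L [set A; B], r != p & r != q].
Proof.
rewrite !in_perpS2 => AB /andP[Ap Bp] /andP[Aq Bq].
have [/collinearP[l [lL Al Bl]] | nAB] := boolP (col A B).
  have [r [rl rp rq]] := card3_other p q (line_card lL).
  exists r; split; rewrite // in_perpS2.
  by rewrite !(line_collinear lL _ rl).
case/collinearP: Ap => lp [lpL Alp plp]; case/collinearP: Aq => lq [lqL Alq qlq].
have [l [+ llp llq]] := card3_other lp lq (lines_through_card A).
rewrite inE => /andP[lL Al].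
have Bl : B \notin l by apply: contra nAB; apply: line_collinear lL Al.
have [r rl Br] := exists_collinear_on_line lL Bl.
have rD z lz : lz \in L -> A \in lz -> z \in lz -> col B z -> l != lz -> r != z.
  move=> lzL Alz zlz Bz; apply: contra => /eqP rz; apply/eqP.
  have Az : A != z by apply: contraNneq nAB => ->; rewrite collinear_sym.
  by apply: (line_uniq lL lzL Az) => //; rewrite -rz.
exists r; split; first by rewrite in_perpS2 Br (line_collinear lL Al rl).
  exact: rD lpL Alp plp Bp llp.
exact: rD lqL Alq qlq Bq llq.
Qed.

Lemma perp2_eq A B p q r : ~~ col A B ->
  p \in perpS L [set A; B] -> q \in perpS L [set A; B] -> r \in perpS L [set A; B] ->
  p != q -> p != r -> q != r -> perpS L [set A; B] = [set p; q; r].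
Proof.
move=> nAB pAB qAB rAB pq pr qr; apply/setP => y; apply/idP/idP; last first.
  by case/set3P => ->.
move=> yAB; have [->|yp] := eqVneq y p; first by rewrite !inE eqxx.
have [->|yq] := eqVneq y q; first by rewrite !inE eqxx orbT.
have [->|yr] := eqVneq y r; first by rewrite !inE eqxx orbT.
move: (pAB) (qAB) (rAB) (yAB); rewrite !in_perpS2.
move=> /andP[Ap _] /andP[Aq _] /andP[Ar _] /andP[Ay _].
have nc := perp2_noncollinear nAB.
by case: (four_noncollinear Ap Aq Ar Ay); apply: nc; rewrite // eq_sym.
Qed.

Lemma perp2_regular_noncollinear u w a b c p : ~~ col u w ->
  a \in perpS L [set u; w] -> b \in perpS L [set u; w] -> c \in perpS L [set u; w] ->
  a != b -> a != c -> b != c -> p != u -> p != w ->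
  p \in perpS L [set a; b] -> col c p.
Proof.
move=> nuw auw buw cuw ab ac bc pu pw pab; apply: contraT => ncp.
have nab := perp2_noncollinear nuw auw buw ab.
have nac := perp2_noncollinear nuw auw cuw ac.
have nbc := perp2_noncollinear nuw buw cuw bc.
move: (auw) (buw) (cuw) (pab); rewrite !in_perpS2.
move=> /andP[ua wa] /andP[ub wb] /andP[uc wc] /andP[ap bp].
have uab : u \in perpS L [set a; b].
  by rewrite in_perpS2 (collinear_sym a) (collinear_sym b) ua ub.
have wab : w \in perpS L [set a; b].
  by rewrite in_perpS2 (collinear_sym a) (collinear_sym b) wa wb.
have npu := perp2_noncollinear nab pab uab pu.
have npw := perp2_noncollinear nab pab wab pw.
have cu : c != u by apply: contraNneq nuw => <-; rewrite collinear_sym.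
have cw : c != w by apply: contraNneq nuw => <-.
case/collinearP: uc => l1 [l1L ul1 cl1]; case/collinearP: wc => l2 [l2L wl2 cl2].
have [u2 [u2c u2u el1]] := line_third l1L cl1 ul1 cu.
have [w2 [w2c w2w el2]] := line_third l2L cl2 wl2 cw.
have u2l1 : u2 \in l1 by rewrite el1 !inE eqxx !orbT.
have w2l2 : w2 \in l2 by rewrite el2 !inE eqxx !orbT.
rewrite collinear_sym in ncp.
have pu2 : col p u2 by apply: (@collinear_third_on_line c u); rewrite -?el1.
have pw2 : col p w2 by apply: (@collinear_third_on_line c w); rewrite -?el2.
have miss z : ~~ col z c -> col z u -> col z w -> ~~ col z u2 && ~~ col z w2.
  move=> zc zu zw.
  have zl1 : z \notin l1 by apply: contra zc => zl1; apply: line_collinear l1L zl1 cl1.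
  have zl2 : z \notin l2 by apply: contra zc => zl2; apply: line_collinear l2L zl2 cl2.
  rewrite (noncollinear_on_line l1L zl1 ul1 u2l1 _ zu) 1?eq_sym //.
  by rewrite (noncollinear_on_line l2L zl2 wl2 w2l2 _ zw) 1?eq_sym.
have /andP[nau2 naw2] : ~~ col a u2 && ~~ col a w2.
  by apply: miss; rewrite // collinear_sym.
have /andP[nbu2 nbw2] : ~~ col b u2 && ~~ col b w2.
  by apply: miss; rewrite // collinear_sym.
rewrite collinear_sym in ap; rewrite collinear_sym in bp.
(* p lies on only three lines, so two of a, b, u2, w2 are collinear, and only u2, w2
   can be; as there are no triangles, this forces l1 = l2 and hence u ~ w. *)
have u2w2 : col u2 w2.
  by apply: contraT => nu2w2; case: (four_noncollinear ap bp pu2 pw2).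
have l12 := lines_eq_of_collinear l1L l2L cl1 cl2 u2l1 w2l2 u2c w2c u2w2.
by move: nuw; rewrite (line_collinear l2L _ wl2) // -l12.
Qed.

Lemma perp2_regular u w a b c p : u != w ->
  a \in perpS L [set u; w] -> b \in perpS L [set u; w] -> c \in perpS L [set u; w] ->
  a != b -> a != c -> b != c -> p \in perpS L [set a; b] -> col c p.
Proof.
move=> uw auw buw cuw ab ac bc pab.
have [/collinearP[l [lL ul wl]] | nuw] := boolP (col u w); last first.
  have /andP[uc wc] : col u c && col w c by rewrite -in_perpS2.
  have [->|pu] := eqVneq p u; first by rewrite collinear_sym.
  have [->|pw] := eqVneq p w; first by rewrite collinear_sym.
  exact: (perp2_regular_noncollinear nuw auw buw cuw).
have on_l z : z \in perpS L [set u; w] -> z \in l.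
  by rewrite in_perpS2 => /andP[uz wz]; apply: (mem_line_collinear2 lL ul wl uw);
    rewrite collinear_sym.
move: pab; rewrite in_perpS2 => /andP[ap bp].
have pl : p \in l.
  by apply: (mem_line_collinear2 lL (on_l a auw) (on_l b buw) ab); rewrite collinear_sym.
exact: line_collinear lL (on_l c cuw) pl.
Qed.

Lemma perpS_line l : l \in L -> perpS L l = l.
Proof.
move=> lL; apply/setP => y; apply/perpSP/idP => [yl | yl a al]; last first.
  exact: line_collinear lL al yl.
have /card_gt0P[a al] : 0 < #|l| by rewrite line_card.
have [b [bl ba _]] := card3_other a a (line_card lL).
by apply: (mem_line_collinear2 lL bl al ba); rewrite collinear_sym; apply: yl.
Qed.

Lemma complete_triad_perp2 A B C p q r : ~~ col A B -> p != q ->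
  A \in perpS L [set p; q] -> B \in perpS L [set p; q] -> C \in perpS L [set p; q] ->
  C != A -> C != B -> r \in perpS L [set A; B] -> r != p -> r != q ->
  complete_triad L [set A; B; C] /\ perpS L [set A; B; C] = [set p; q; r].
Proof.
move=> nAB pq Apq Bpq Cpq CA CB rAB rp rq.
have AB : A != B by apply: contraNneq nAB => ->; apply: collinear_refl.
have pqAB z : z \in [set p; q] -> z \in perpS L [set A; B].
  move: Apq Bpq; rewrite !in_perpS2 => /andP[pA qA] /andP[pB qB].
  by case/set2P=> ->; rewrite (collinear_sym A) (collinear_sym B) ?pA ?pB ?qA ?qB.
have npq : ~~ col p q by apply: (perp2_noncollinear nAB); rewrite ?pqAB ?inE ?eqxx ?orbT.
have nAC : ~~ col A C by apply: (perp2_noncollinear npq); rewrite // eq_sym.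
have nBC : ~~ col B C by apply: (perp2_noncollinear npq); rewrite // eq_sym.
have Cr : col C r.
  by apply: (perp2_regular_noncollinear npq Apq Bpq Cpq); rewrite // eq_sym.
have ABpqr : perpS L [set A; B] = [set p; q; r].
  by apply: perp2_eq; rewrite // ?pqAB ?inE ?eqxx ?orbT // eq_sym.
have eT : perpS L [set A; B; C] = [set p; q; r].
  apply/setP => y; rewrite in_perpS3 andbA -in_perpS2 ABpqr andb_idr //.
  move: Cpq; rewrite in_perpS2 !(collinear_sym _ C) => /andP[Cp Cq].
  by case/set3P => ->.
split=> //; split; last by rewrite eT cards3 // eq_sym.
split; first by rewrite cards3 // eq_sym.
move=> x y /set3P[]-> /set3P[]->; rewrite ?eqxx // => _;
  by rewrite 1?collinear_sym.
Qed.
End GeneralizedQuadrangle.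

Lemma imset_set3 (T U : finType) (f : T -> U) (a b c : T) :
  f @: [set a; b; c] = [set f a; f b; f c].
Proof. by rewrite !imsetU !imset_set1. Qed.

Section Walks.
Variables (P P' : finType) (L : {set {set P}}) (L' : {set {set P'}}) (f : P -> P').
Local Notation adj := (adjS L L' f).
Local Notation walk := (walkS L L' f).

Lemma adjS_sym a b : adj a b -> adj b a.
Proof. by case=> ab [Lam [lam [aL bL]]]; split; [rewrite eq_sym | exists Lam]. Qed.

Lemma walkS_sym a b n : walk a b n -> walk b a n.
Proof.
case=> w [w0 wn wadj]; exists (fun i => w (n - i)); split; rewrite ?subn0 ?subnn //.
move=> i lt_in; rewrite -subnSK //; apply/adjS_sym/wadj.
by rewrite ltn_subrL (leq_ltn_trans _ lt_in).
Qed.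

Lemma distS_sym a b n : distS L L' f a b n -> distS L L' f b a n.
Proof.
by case=> wab short; split=> [|m lt_mn /walkS_sym]; [apply: walkS_sym | apply: short].
Qed.

Lemma walkS3 a b c d : adj a b -> adj b c -> adj c d -> walk a d 3.
Proof.
move=> ab bc cd; exists (fun i => nth d [:: a; b; c] i); split=> //.
by case=> [|[|[|]]].
Qed.

Lemma adjS_lineS a p b q c r : a != b ->
  lineS L L' f [set (a, p); (b, q); (c, r)] -> adj (a, p) (b, q).
Proof.
move=> ab lam; split; first by rewrite xpair_eqE negb_and ab.
by exists [set (a, p); (b, q); (c, r)]; rewrite !inE !eqxx ?orbT.
Qed.

Lemma adjS_perpS (gqL' : is_GQ22 L') a p b q : adj (a, p) (b, q) ->
  [/\ a != b, p != q, p \in perpS L' [set f a; f b] & q \in perpS L' [set f a; f b]].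
Proof.
case=> apbq [_ [[x [y [z [u [v [w [-> [_ [xy yz xz]] _ [uv vw uw] eT]]]]]]] [ap bq]]].
have memTU c r : (c, r) \in [set (x, u); (y, v); (z, w)] ->
    c \in [set x; y; z] /\ r \in [set u; v; w].
  by case/set3P=> -[-> ->]; rewrite !inE !eqxx ?orbT.
have colTU c r : c \in [set x; y; z] -> r \in [set u; v; w] -> collinear L' (f c) r.
  by move=> cT; rewrite eT => /(perpSP gqL'); apply; apply: imset_f.
have [[aT pU] [bT qU]] := (memTU _ _ ap, memTU _ _ bq).
have [ab pq] : a != b /\ p != q.
  move: ap bq apbq => /set3P[] [-> ->] /set3P[] [-> ->];
    rewrite ?eqxx // => _; by split; rewrite // eq_sym.
by split; rewrite // (in_perpS2 gqL') !colTU.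
Qed.
End Walks.

Section Isomorphism.
Variables (P P' : finType) (L : {set {set P}}) (L' : {set {set P'}}).
Variables (f : P -> P') (g : P' -> P).
Hypotheses (gqL : is_GQ22 L) (gqL' : is_GQ22 L').
Hypotheses (fK : cancel f g) (gK : cancel g f).
Hypothesis f_lines : forall l : {set P}, (f @: l \in L') = (l \in L).
Local Notation col := (collinear L).
Local Notation col' := (collinear L').
Local Notation adj := (adjS L L' f).

Let f_inj : injective f := can_inj fK.

Lemma collinear_iso a b : col' (f a) (f b) = col a b.
Proof.
apply/collinearP/collinearP => -[l [lL al bl]]; last first.
  by exists (f @: l); rewrite f_lines !imset_f.
have fgl : f @: (g @: l) = l.
  by rewrite -imset_comp (eq_imset _ gK) imset_id.
by exists (g @: l); rewrite -f_lines fgl -(fK a) -(fK b) !imset_f.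
Qed.

Lemma perpS_iso (T : {set P}) : f @: perpS L T = perpS L' (f @: T).
Proof.
apply/setP => y; rewrite -(gK y) (mem_imset _ _ f_inj).
apply/(perpSP gqL)/(perpSP gqL') => yT.
  by move=> _ /imsetP[a aT ->]; rewrite collinear_iso yT.
by move=> a aT; rewrite -collinear_iso yT ?imset_f.
Qed.

Lemma complete_triad_iso (T : {set P}) : complete_triad L' (f @: T) -> complete_triad L T.
Proof.
case=> [[T3 Tnc] perp3]; split; last by rewrite -(card_imset _ f_inj) perpS_iso.
split=> [|x y xT yT xy]; first by rewrite -(card_imset _ f_inj).
by rewrite -collinear_iso Tnc ?imset_f ?(inj_eq f_inj).
Qed.

Lemma lineS_perpS a b c p q r : a != b -> b != c -> a != c ->
  p != q -> q != r -> p != r ->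
  [set a; b; c] \in L \/ complete_triad L [set a; b; c] ->
  perpS L' (f @: [set a; b; c]) = [set p; q; r] ->
  lineS L L' f [set (a, p); (b, q); (c, r)].
Proof.
move=> ab bc ac pq qr pr T eT.
have pt x z : x \in [set a; b; c] -> z \in [set p; q; r] -> ptS L' f (x, z).
  by move=> xT; rewrite -eT /ptS /= (in_perp gqL') => /(perpSP gqL'); apply; apply: imset_f.
exists a, b, c, p, q, r; split=> //.
by split=> //; split; apply: pt; rewrite !inE eqxx ?orbT.
Qed.

Lemma perpS_adjS a p b q : a != b -> p != q ->
  p \in perpS L' [set f a; f b] -> q \in perpS L' [set f a; f b] -> adj (a, p) (b, q).
Proof.
move=> ab pq pab qab; have fab : f a != f b by rewrite (inj_eq f_inj).
have gD c : c != f a -> c != f b -> b != g c /\ a != g c.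
  by move=> ca cb; split; [apply: contraNneq cb | apply: contraNneq ca] => ->; rewrite gK.
have [/collinearP[l [lL al bl]] | nab] := boolP (col' (f a) (f b)).
  have on_l z : z \in perpS L' [set f a; f b] -> z \in l.
    rewrite (in_perpS2 gqL') => /andP[az bz].
    by apply: (mem_line_collinear2 gqL' lL al bl fab); rewrite collinear_sym.
  have [c [ca cb el]] := line_third gqL' lL al bl fab.
  have [r [rp rq er]] := line_third gqL' lL (on_l p pab) (on_l q qab) pq.
  have [bc ac] := gD c ca cb.
  have eT : f @: [set a; b; g c] = l by rewrite imset_set3 gK -el.
  apply: (adjS_lineS (c := g c) (r := r) ab); apply: lineS_perpS; rewrite // 1?eq_sym //.
    by left; rewrite -f_lines eT.
  by rewrite eT perpS_line.
have fpq z : z \in [set f a; f b] -> z \in perpS L' [set p; q].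
  move: pab qab; rewrite !(in_perpS2 gqL') => /andP[ap bp] /andP[aq bq].
  by case/set2P=> ->; rewrite (collinear_sym L' p) (collinear_sym L' q) ?ap ?aq ?bp ?bq.
have apq : f a \in perpS L' [set p; q] by rewrite fpq ?inE ?eqxx.
have bpq : f b \in perpS L' [set p; q] by rewrite fpq ?inE ?eqxx ?orbT.
have [C [Cpq Ca Cb]] := perp2_other gqL' pq apq bpq.
have [r [rab rp rq]] := perp2_other gqL' fab pab qab.
have [bc ac] := gD C Ca Cb.
have [triad eT] := complete_triad_perp2 gqL' nab pq apq bpq Cpq Ca Cb rab rp rq.
have eT' : f @: [set a; b; g C] = [set f a; f b; C] by rewrite imset_set3 gK.
apply: (adjS_lineS (c := g C) (r := r) ab); apply: lineS_perpS; rewrite // 1?eq_sym //.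
  by right; apply: complete_triad_iso; rewrite eT'.
by rewrite eT' eT.
Qed.

Lemma walkS3_of_perp x y u v : x != y ->
  col' (f x) u -> col' (f y) u -> col' (f y) v -> ~~ col' (f x) v ->
  walkS L L' f (x, u) (y, v) 3.
Proof.
move=> xy xu yu yv nxv; have fxy : f x != f y by rewrite (inj_eq f_inj).
have uxy : u \in perpS L' [set f x; f y] by rewrite (in_perpS2 gqL') xu yu.
have [w1 [w1xy w1u _]] := perp2_other gqL' fxy uxy uxy.
move: (w1xy); rewrite (in_perpS2 gqL') => /andP[xw1 yw1].
have w1v : w1 != v by apply: contraNneq nxv => <-.
have yw1v : f y \in perpS L' [set w1; v].
  by rewrite (in_perpS2 gqL') !(collinear_sym L' _ (f y)) yw1 yv.
have [Z [Zw1v Zy _]] := perp2_other gqL' w1v yw1v yw1v.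
move: (Zw1v); rewrite (in_perpS2 gqL') => /andP[w1Z vZ].
have yZ : f y != Z by rewrite eq_sym.
have w1yZ : w1 \in perpS L' [set f y; Z] by rewrite (in_perpS2 gqL') yw1 collinear_sym.
have vyZ : v \in perpS L' [set f y; Z] by rewrite (in_perpS2 gqL') yv collinear_sym.
have [w2 [w2yZ w2w1 w2v]] := perp2_other gqL' yZ w1yZ vyZ.
have ygZ : y != g Z by apply: contraNneq yZ => ->; rewrite gK.
apply: (walkS3 (b := (y, w1)) (c := (g Z, w2))); apply: perpS_adjS;
  rewrite ?gK // 1?eq_sym //; by rewrite setUC.
Qed.

Lemma walkS_lt3_of_perp x y u v : x != y ->
  col' (f x) u -> col' (f y) u -> ~~ col' (f x) v ->
  forall m, m < 3 -> ~ walkS L L' f (x, u) (y, v) m.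
Proof.
move=> xy xu yu nxv [|[|[|//]]] _ [w [w0 wm wadj]].
- by move: wm; rewrite w0 => -[/eqP]; rewrite (negbTE xy).
- have := wadj 0 isT; rewrite w0 wm => /(adjS_perpS gqL')[_ _ _].
  by rewrite (in_perpS2 gqL') (negbTE nxv).
have := wadj 1 isT; have := wadj 0 isT; rewrite w0 wm; case: (w 1) => z t.
move=> /(adjS_perpS gqL')[xz ut uxz txz] /(adjS_perpS gqL')[zy tv tzy vzy].
apply: (negP nxv).
move: uxz txz tzy; rewrite !(in_perpS2 gqL') => /andP[_ zu] /andP[xt zt] /andP[_ yt].
have fD (a b : P) : a != b -> f a != f b by rewrite (inj_eq f_inj).
have [zx yx] : z != x /\ y != x by rewrite !(eq_sym _ x).
apply: (perp2_regular gqL' ut _ _ _ (fD _ _ zy) (fD _ _ zx) (fD _ _ yx) vzy).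
- by rewrite (in_perpS2 gqL') !(collinear_sym L' _ (f z)) zu zt.
- by rewrite (in_perpS2 gqL') !(collinear_sym L' _ (f y)) yu yt.
by rewrite (in_perpS2 gqL') !(collinear_sym L' _ (f x)) xu xt.
Qed.

Lemma distS3_of_perp x y u v : x != y ->
  col' (f x) u -> col' (f y) u -> col' (f y) v -> ~~ col' (f x) v ->
  distS L L' f (x, u) (y, v) 3.
Proof.
by move=> xy xu yu yv nxv; split; [apply: walkS3_of_perp | apply: walkS_lt3_of_perp].
Qed.
End Isomorphism.

Theorem lemma3p3 (P P' : finType) (L : {set {set P}}) (L' : {set {set P'}})
  (f : P -> P') :
  is_GQ22 L -> is_GQ22 L' -> isom L L' f ->
  forall (x y : P) (u v : P'),
    ptS L' f (x, u) -> ptS L' f (y, v) ->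
    x != y -> u != v ->
    (u \in perp L' (f y) /\ v \notin perp L' (f x)) \/
    (u \notin perp L' (f y) /\ v \in perp L' (f x)) ->
    distS L L' f (x, u) (y, v) 3.
Proof.
move=> gqL gqL' [[g fK gK] f_lines] x y u v.
(* [u != v] is implied by [x' ~ u] and [x' ~/~ v]. *)
rewrite /ptS /= !(in_perp gqL') => xu yv xy _.
have dist3 := distS3_of_perp gqL gqL' fK gK f_lines.
case=> [[yu nxv] | [nyu xv]]; first exact: dist3.
by apply: distS_sym; apply: dist3; rewrite // eq_sym.
Qed.
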